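(* Let $f$ be a multiplicative function from the positive integers to the nonnegative integers with $f(p^{k-1})\le f(p^k)$ for all primes $p$ and all integers $k\ge 1$. Then every $f$-practical number is weakly $f$-practical.
   Context: $f$ multiplicative means $f(1)=1$ and $f(ab)=f(a)f(b)$ for coprime $a,b$. $S_f(n)=\sum_{d\mid n} f(d)$. A positive integer $n$ is $f$-practical if every positive integer $m\le S_f(n)$ equals $\sum_{d\in\mathcal{D}}f(d)$ for some set $\mathcal{D}$ of distinct divisors of $n$. Write $n=p_1^{e_1}\cdots p_k^{e_k}$ with distinct primes ordered so that $f(p_1)\le f(p_2)\le\cdots\le f(p_k)$, and let $m_i=\prod_{j=1}^{i}p_j^{e_j}$ for $0\le i<k$ (so $m_0=1$). Then $n$ is called weakly $f$-practical if $f(p_{i+1})\le S_f(m_i)+1$ for every $0\le i<k$. *)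

From mathcomp Require Import all_boot.
Set Implicit Arguments.
Unset Strict Implicit.
Unset Printing Implicit Defensive.

Definition multiplicative (f : nat -> nat) : Prop :=
  f 1 = 1 /\ forall a b, 0 < a -> 0 < b -> coprime a b -> f (a * b) = f a * f b.

Definition Sf (f : nat -> nat) (n : nat) : nat := \sum_(d <- divisors n) f d.

Definition f_practical (f : nat -> nat) (n : nat) : Prop :=
  0 < n /\
  forall m, 0 < m -> m <= Sf f n ->
    exists D : seq nat, [/\ uniq D, all (fun d => d %| n) D &
                            \sum_(d <- D) f d = m].

Definition mpart (s : seq nat) (n i : nat) : nat :=
  \prod_(p <- take i s) p ^ logn p n.

(* n is weakly f-practical: for the ordering p_1,...,p_k of the distinct prime
   divisors of n with f(p_1) <= ... <= f(p_k), f(p_{i+1}) <= S_f(m_i) + 1 for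
   all 0 <= i < k.  (Quantified over every such ordering.) *)
Definition weakly_f_practical (f : nat -> nat) (n : nat) : Prop :=
  0 < n /\
  forall s : seq nat, perm_eq s (primes n) ->
    sorted (fun p q => f p <= f q) s ->
    forall i, i < size s -> f (nth 0 s i) <= Sf f (mpart s n i) + 1.

From mathcomp Require Import all_boot.

(* Let q = p_(i+1), M = m_i and suppose f(q) > S_f(M) + 1.  Since q | n,
   S_f(M) + 1 <= S_f(n), so S_f(M) + 1 is a sum of f(d) over distinct
   divisors d of n.  A divisor d of n not dividing M has a prime factor p
   outside p_1, ..., p_i, hence f(p) >= f(q); by multiplicativity and the
   monotonicity of f on prime powers, f(d) is then either 0 or at least
   f(p) >= f(q) > S_f(M) + 1, so such d contribute nothing.  The remaining
   d are distinct divisors of M, whose f-values sum to at most S_f(M). *)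

Lemma sorted_nth_le_notin_take {T : eqType} {leT : rel T} x0 {s i x} :
  transitive leT -> reflexive leT -> sorted leT s ->
  x \in s -> x \notin take i s -> leT (nth x0 s i) x.
Proof.
move=> leT_tr leT_refl s_sorted xs; rewrite in_take // -leqNgt => le_i_x.
rewrite -[x in leT _ x](nth_index x0 xs).
apply: (sorted_leq_nth leT_tr leT_refl) => //; rewrite inE ?index_mem //.
by rewrite (leq_ltn_trans le_i_x) ?index_mem.
Qed.

Lemma mpart_gt0 s n i : 0 < mpart s n i.
Proof.
rewrite /mpart; elim/big_rec: _ => // p m _ m_gt0.
(* no primality of [p] is needed: [0 ^ logn 0 n = 0 ^ 0 = 1] *)
by rewrite muln_gt0 m_gt0 andbT; case: p.
Qed.

Lemma dvdn_mpart s n i d : 0 < n -> d %| n ->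
  {subset primes d <= take i s} -> d %| mpart s n i.
Proof.
move=> n_gt0 dvd_dn sub_ds; have d_gt0 := dvdn_gt0 n_gt0 dvd_dn.
apply/dvdn_partP => // p /sub_ds p_s.
apply: dvdn_trans (partn_dvd p n_gt0 dvd_dn) _.
by rewrite p_part /mpart (big_rem _ p_s) dvdn_mulr.
Qed.

Lemma f_le_Sf f {n d} : 0 < n -> d %| n -> f d <= Sf f n.
Proof.
move=> n_gt0; rewrite /Sf dvdn_divisors // => d_n.
by rewrite (big_rem d) ?leq_addr.
Qed.

Lemma sum_le_Sf_of_gap {f M c} {D : seq nat} : 0 < M -> uniq D ->
    {in D, forall d, ~~ (d %| M) -> 0 < f d -> c <= f d} ->
  \sum_(d <- D) f d < c -> \sum_(d <- D) f d <= Sf f M.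
Proof.
move=> M_gt0 uD gap sum_lt_c.
have out0 : \sum_(d <- D | ~~ (d %| M)) f d = 0.
  apply: big1_seq => d /andP[ndvd_dM dD]; apply/eqP; rewrite -leqn0 leqNgt.
  apply/negP => /(gap d dD ndvd_dM) le_c_fd.
  have le_fd_sum : f d <= \sum_(e <- D) f e by rewrite (big_rem d dD) leq_addr.
  by have := leq_ltn_trans (leq_trans le_c_fd le_fd_sum) sum_lt_c; rewrite ltnn.
rewrite (bigID (fun d => d %| M)) /= out0 addn0 /Sf.
apply: (uniq_sub_le_big_cond leqnn (fun x y => leq_addr y x)).
- exact: filter_uniq.
- by rewrite filter_predT divisors_uniq.
- by move=> d; rewrite filter_predT mem_filter -dvdn_divisors // => /andP[].
Qed.

Section MonotoneMultiplicative.

Context {f : nat -> nat}.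
Hypothesis f_mul : multiplicative f.
Hypothesis f_mono :
  forall p k, prime p -> 0 < k -> f (p ^ (k - 1)) <= f (p ^ k).

Lemma f_prime_le_pow p k : prime p -> 0 < k -> f p <= f (p ^ k).
Proof.
move=> p_pr; elim: k => [|[|k] IHk] // _.
by apply: leq_trans (IHk isT) _; have := f_mono p k.+2 p_pr isT; rewrite subn1.
Qed.

Lemma f_prime_le_dvd p d : prime p -> 0 < d -> p %| d -> 0 < f d -> f p <= f d.
Proof.
move=> p_pr d_gt0 dvd_pd; have [_ fM] := f_mul.
rewrite -(partnC p d_gt0) fM ?part_gt0 ?coprime_partC //.
rewrite muln_gt0 => /andP[_ f'_gt0].
apply: leq_trans (leq_pmulr _ f'_gt0).
by rewrite p_part f_prime_le_pow // logn_gt0 mem_primes p_pr d_gt0.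
Qed.

Context {n : nat} {s : seq nat} {i : nat}.
Hypotheses (n_gt0 : 0 < n) (s_primes : perm_eq s (primes n)).
Hypothesis s_sorted : sorted (fun p q => f p <= f q) s.

Lemma f_nth_le_ndvd_mpart d : d %| n -> ~~ (d %| mpart s n i) -> 0 < f d ->
  f (nth 0 s i) <= f d.
Proof.
move=> dvd_dn ndvd_dM fd_gt0; have d_gt0 := dvdn_gt0 n_gt0 dvd_dn.
have /allPn[p pd p_notin] : ~~ all (mem (take i s)) (primes d).
  by apply: contra ndvd_dM => /allP; apply: dvdn_mpart.
move: pd; rewrite mem_primes => /and3P[p_pr _ dvd_pd].
have p_s : p \in s.
  by rewrite (perm_mem s_primes) mem_primes p_pr n_gt0 (dvdn_trans dvd_pd).
have f_le_tr : transitive (fun a b => f a <= f b).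
  by move=> b a c; apply: leq_trans.
apply: leq_trans _ (f_prime_le_dvd p d p_pr d_gt0 dvd_pd fd_gt0).
exact: (sorted_nth_le_notin_take 0 f_le_tr (fun a => leqnn (f a)) s_sorted
         p_s p_notin).
Qed.

End MonotoneMultiplicative.

Theorem theorem2p2 (f : nat -> nat) :
  multiplicative f ->
  (forall p k, prime p -> 0 < k -> f (p ^ (k - 1)) <= f (p ^ k)) ->
  forall n : nat, f_practical f n -> weakly_f_practical f n.
Proof.
move=> f_mul f_mono n [n_gt0 n_practical].
split=> // s s_primes s_sorted i lt_i_s.
set q := nth 0 s i; set M := mpart s n i.
rewrite leqNgt; apply/negP => lt_SfM_fq.
have dvd_qn : q %| n.
  have : q \in primes n by rewrite -(perm_mem s_primes) mem_nth.
  by rewrite mem_primes => /and3P[].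
have le_SfM_Sfn : Sf f M + 1 <= Sf f n.
  exact: ltnW (leq_trans lt_SfM_fq (f_le_Sf f n_gt0 dvd_qn)).
have [D [uD /allP dvd_Dn sumD]] := n_practical _ (leq_addl _ 1) le_SfM_Sfn.
have gap : {in D, forall d, ~~ (d %| M) -> 0 < f d -> f q <= f d}.
  by move=> d dD; apply: f_nth_le_ndvd_mpart (dvd_Dn d dD).
have sum_lt_fq : \sum_(d <- D) f d < f q by rewrite sumD.
have := sum_le_Sf_of_gap (mpart_gt0 s n i) uD gap sum_lt_fq.
by rewrite sumD addn1 ltnn.
Qed.
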